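(* The family $\mathcal D_n$ of derangements of $[n]$ is $\left(\frac n{12},\frac n4\right)$-spread.
   Context: A derangement is a permutation of $[n]$ without fixed points; each permutation is identified with its graph $\{(i,\sigma(i)):i\in[n]\}\subset[n]^2$. For a family $\mathcal{F}$ of subsets of $[n]^2$ and $X\subset[n]^2$, $\mathcal{F}(X):=\{F\setminus X: X\subset F\in\mathcal{F}\}$. $\mathcal{F}$ is $r$-spread if $|\mathcal{F}(X)|\le r^{-|X|}|\mathcal{F}|$ for all $X$, and $(r,q)$-spread if $\mathcal{F}(A)$ is $r$-spread for every $A\subset[n]^2$ with $|A|\le q$. *)

From mathcomp Require Import all_boot all_order all_fingroup all_algebra.
Set Implicit Arguments. Unset Strict Implicit. Unset Printing Implicit Defensive.
Import GRing.Theory Num.Theory.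
Local Open Scope ring_scope.

Definition cell (n : nat) := ('I_n * 'I_n)%type.

Definition perm_graph (n : nat) (s : {perm 'I_n}) : {set cell n} :=
  [set (i, s i) | i : 'I_n].

Definition is_derangement (n : nat) (s : {perm 'I_n}) : bool :=
  [forall i, s i != i].

Definition derangements (n : nat) : {set {set cell n}} :=
  [set perm_graph s | s : {perm 'I_n} & is_derangement s].

Definition link (T : finType) (F : {set {set T}}) (X : {set T}) : {set {set T}} :=
  [set G :\: X | G in F & X \subset G].

Definition spread (T : finType) (r : rat) (F : {set {set T}}) : Prop :=
  forall X : {set T}, (#|link F X|%:R : rat) <= r ^- #|X| * #|F|%:R.

Definition spread2 (T : finType) (r q : rat) (F : {set {set T}}) : Prop :=
  forall A : {set T}, (#|A|%:R : rat) <= q -> spread r (link F A).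

From mathcomp Require Import all_boot all_order all_fingroup all_algebra.
From mathcomp Require Import zify ring.
Set Implicit Arguments. Unset Strict Implicit. Unset Printing Implicit Defensive.

(* Write D(B) for the derangements whose graph contains B; for disjoint A and X
   the family (D_n(A))(X) is in bijection with D(A :|: X).  Switching: if s lies in
   D(B + (u, v)) and w avoids the rows of B and the points u, v, s^-1 u, then
   s o (u w) lies in D(B) and remembers (s, w), w being its preimage of v; hence
   (n - |B| - 3) |D(B + e)| <= |D(B)|.  Adding the cells of X one by one gives
   K^_|X| |D(A :|: X)| <= |D(A)| with K = n - |A| - 3 >= 3n/4 - 3 (the falling
   factorial capped at K!), and the Stirling-type estimate K^y (K - y)! <= 3^y K!
   yields (n/12)^|X| <= K^_|X|. *)

(* (1 + 1/j)^y <= (2j + y)/(2j - y), which is at most 3 for y <= j. *)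
Lemma expSn_mul_le j y : y <= j -> j.+1 ^ y * (2 * j - y) <= j ^ y * (2 * j + y).
Proof.
elim: y => [|y IH] le_yj; first by rewrite !expn0 !mul1n; lia.
have {}IH := IH (ltnW le_yj).
rewrite -(@leq_pmul2r (2 * j - y)); last by lia.
have -> : j.+1 ^ y.+1 * (2 * j - y.+1) * (2 * j - y)
        = j.+1 * (2 * j - y.+1) * (j.+1 ^ y * (2 * j - y)) by rewrite expnS; ring.
apply: (leq_trans (leq_mul (leqnn _) IH)).
have -> : j ^ y.+1 * (2 * j + y.+1) * (2 * j - y)
        = j * (2 * j + y.+1) * (2 * j - y) * j ^ y by rewrite expnS; ring.
rewrite mulnCA [X in _ <= X]mulnC leq_mul2l; apply/orP; right.
have [d ->] : exists d, j = y.+1 + d by exists (j - y.+1); lia.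
have -> : 2 * (y.+1 + d) - y.+1 = y.+1 + 2 * d by lia.
have -> : 2 * (y.+1 + d) - y = y + 2 + 2 * d by lia.
nia.
Qed.

Lemma expSn_le j y : y <= j -> j.+1 ^ y <= 3 * j ^ y.
Proof.
case: j => [|j] le_yj; first by have -> : y = 0 by lia.
rewrite -(@leq_pmul2r (2 * j.+1 - y)); last by lia.
apply: leq_trans (expSn_mul_le le_yj) _.
by rewrite -mulnA mulnCA leq_mul2l; apply/orP; right; lia.
Qed.

Lemma expnD_le j k y : y <= j -> (j + k) ^ y <= 3 ^ k * j ^ y.
Proof.
move=> le_yj; elim: k => [|k IH]; first by rewrite addn0 mul1n.
rewrite addnS expnS -mulnA.
by apply: leq_trans (expSn_le (leq_trans le_yj (leq_addr _ _))) _; rewrite leq_mul2l IH orbT.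
Qed.

Lemma exp_fact_le K y : y <= K -> K ^ y * (K - y)`! <= 3 ^ y * K`!.
Proof.
elim: K y => [|K IH] [|y] // le_yK.
rewrite subSS factS !expnS.
have -> : 3 * 3 ^ y * (K.+1 * K`!) = K.+1 * (3 * (3 ^ y * K`!)) by ring.
rewrite -mulnA leq_mul2l; apply/orP; right.
apply: leq_trans (leq_mul (expSn_le (le_yK : y <= K)) (leqnn (K - y)`!)) _.
by rewrite -mulnA leq_mul2l IH.
Qed.

Lemma cube_le_exp3 m : m ^ 3 <= 3 ^ m.
Proof.
elim: m => [|m IH] //; case: (leqP m 2) => [le_m2 | lt2m].
  by case: m le_m2 {IH} => [|[|[|]]].
rewrite [3 ^ _]expnS; apply: leq_trans _ (leq_mul (leqnn 3) IH).
by rewrite !expnS expn0; nia.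
Qed.

Lemma expnn_le_fact K : (K + 3) ^ (K + 3) <= 9 ^ (K + 3) * K`!.
Proof.
have h1 : (K + 3) ^ K <= 27 * K ^ K by apply: expnD_le.
have h2 := exp_fact_le (leqnn K); rewrite subnn fact0 muln1 in h2.
have h3 : (K + 3) ^ 3 <= 27 * 3 ^ K by rewrite addnC -[27]/(3 ^ 3) -expnD cube_le_exp3.
rewrite expnD.
apply: leq_trans (leq_mul (leq_trans h1 (leq_mul (leqnn 27) h2)) h3) _.
have -> : 9 ^ (K + 3) = 3 ^ K * 3 ^ K * 729 by rewrite expnD -expnMn.
by apply: eq_leq; ring.
Qed.

Lemma ffact_minnS K y : K ^_ (minn y.+1 K) = K ^_ (minn y K) * maxn 1 (K - y).
Proof.
case: (ltnP y K) => [lt_yK | le_Ky].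
  by rewrite (minn_idPl lt_yK) ffactnSr (maxn_idPr _) // subn_gt0.
by rewrite (minn_idPr (leqW le_Ky)) (_ : K - y = 0) ?muln1 //; apply/eqP; rewrite subn_eq0.
Qed.

Lemma leq_exp2rW m n e : m <= n -> m ^ e <= n ^ e.
Proof. by case: e => // e; rewrite leq_exp2r. Qed.

Lemma exp_le_ffact_small n K x : n <= 4 * K -> x <= K -> n ^ x <= 12 ^ x * K ^_ x.
Proof.
move=> le_nK le_xK.
have leK : K ^ x <= 3 ^ x * K ^_ x.
  by rewrite -(@leq_pmul2r (K - x)`!) ?fact_gt0 // -mulnA ffact_fact // exp_fact_le.
apply: leq_trans (leq_exp2rW x le_nK) _.
by rewrite expnMn -[12]/(4 * 3) expnMn -mulnA leq_mul2l leK orbT.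
Qed.

Lemma exp_le_fact_large n K x :
  12 <= n -> 3 * n <= 4 * (K + 3) -> x <= K + 3 -> n ^ x <= 12 ^ x * K`!.
Proof.
move=> le12n le_nK le_xK3.
rewrite -(@leq_pmul2r (12 ^ (K + 3 - x))) ?expn_gt0 // mulnAC -expnD subnKC //.
apply: leq_trans (_ : n ^ (K + 3) <= _).
  by rewrite -{2}(subnKC le_xK3) expnD leq_mul2l leq_exp2rW ?orbT.
rewrite -(@leq_pmul2r (3 ^ (K + 3))) ?expn_gt0 // -expnMn mulnC.
apply: leq_trans (leq_exp2rW (K + 3) le_nK) _.
rewrite expnMn; apply: leq_trans (leq_mul (leqnn _) (expnn_le_fact K)) _.
rewrite -[12]/(4 * 3) -[9]/(3 * 3) !expnMn.
by apply: eq_leq; ring.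
Qed.

Lemma exp_le_ffact n K x :
  12 <= n -> 3 * n <= 4 * (K + 3) -> x <= K + 3 -> n ^ x <= 12 ^ x * K ^_ (minn x K).
Proof.
move=> le12n le_nK le_xK3; case: (leqP x K) => [le_xK | _].
  by apply: exp_le_ffact_small; lia.
by rewrite ffactnn exp_le_fact_large.
Qed.

Lemma link_link (T : finType) (F : {set {set T}}) (A X : {set T}) :
  [disjoint A & X] -> link (link F A) X = link F (A :|: X).
Proof.
move=> dAX; apply/setP => H; apply/imsetP/imsetP.
  case=> _ /setIdP[/imsetP[G /setIdP[FG sAG] ->] sXGA] ->.
  exists G; last by rewrite setDDl.
  by rewrite inE FG subUset sAG (subset_trans sXGA (subsetDl _ _)).
case=> G /setIdP[FG]; rewrite subUset => /andP[sAG sXG] ->.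
exists (G :\: A); last by rewrite setDDl.
apply/setIdP; split; last by rewrite subsetD sXG disjoint_sym.
by apply/imsetP; exists G; rewrite // inE FG.
Qed.

Lemma link_link_eq0 (T : finType) (F : {set {set T}}) (A X : {set T}) :
  ~~ [disjoint A & X] -> link (link F A) X = set0.
Proof.
move=> not_dAX; apply/setP => H; rewrite inE; apply/imsetP.
case=> _ /setIdP[/imsetP[G _ ->] sXGA] _; move: sXGA.
by rewrite subsetD disjoint_sym (negbTE not_dAX) andbF.
Qed.

Section Derangements.
Variable n : nat.
Implicit Types (s t : {perm 'I_n}) (A B C X Y : {set cell n}).

Lemma mem_perm_graph s i j : ((i, j) \in perm_graph s) = (s i == j).
Proof. by apply/imsetP/eqP => [[k _ [-> ->]] // | <-]; exists i. Qed.

Lemma card_perm_graph s : #|perm_graph s| = n.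
Proof. by rewrite card_imset ?card_ord // => i j []. Qed.

Lemma perm_graph_inj : injective (@perm_graph n).
Proof.
by move=> s t est; apply/permP => i; apply/eqP; rewrite -mem_perm_graph est mem_perm_graph.
Qed.

Definition derangements_over B := [set s | is_derangement s & B \subset perm_graph s].

Lemma derangements_overS B C :
  B \subset C -> derangements_over C \subset derangements_over B.
Proof.
move=> sBC; apply/subsetP => s; rewrite !inE => /andP[-> sCs].
exact: subset_trans sBC sCs.
Qed.

Lemma card_link_derangements B : #|link (derangements n) B| = #|derangements_over B|.
Proof.
have -> : link (derangements n) B = [set perm_graph s :\: B | s in derangements_over B].
  apply/setP => H; apply/imsetP/imsetP.
    case=> _ /setIdP[/imsetP[s ds ->] sB] ->; exists s => //.
    by move: ds; rewrite !inE sB andbT.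
  case=> s; rewrite inE => /andP[ds sB] ->; exists (perm_graph s) => //.
  by rewrite inE sB andbT /derangements imset_f ?inE.
rewrite card_in_imset // => s t; rewrite !inE => /andP[_ sBs] /andP[_ sBt] est.
apply: perm_graph_inj.
by rewrite -(setID (perm_graph s) B) -(setID (perm_graph t) B) est (setIidPr sBs) (setIidPr sBt).
Qed.

Section Switching.
Variables (B : {set cell n}) (u v : 'I_n).
Hypothesis uvB : (u, v) \notin B.

Let B' := (u, v) |: B.
Let free s := ~: ([set c.1 | c in B] :|: [set u; v; (s^-1)%g u]).
Let switch s w := (tperm u w * s)%g.

Lemma card_free s : n - #|B| - 3 <= #|free s|.
Proof.
rewrite /free; set R := [set c.1 | c in B]; set U := [set u; v; _].
have cU : #|U| <= 3.
  by apply: leq_trans (leq_card_setU _ _).1 _; rewrite cards2 cards1; case: (u != v).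
have cR : #|R| <= #|B| by apply: leq_imset_card.
have := cardsC (R :|: U); have := (leq_card_setU R U).1.
rewrite card_ord; lia.
Qed.

Lemma switch_over s w :
  s \in derangements_over B' -> w \in free s -> switch s w \in derangements_over B.
Proof.
rewrite !inE => /andP[/forallP ds sBs]; rewrite -!orbA !negb_or => /and4P[wB wu wv wsu].
have su : s u = v by apply/eqP; rewrite -mem_perm_graph (subsetP sBs) // setU11.
apply/andP; split.
  apply/forallP => i; rewrite permM.
  have [-> | iu] := eqVneq i u.
    by rewrite tpermL; apply: contra wsu => /eqP <-; rewrite permK.
  have [-> | iw] := eqVneq i w; first by rewrite tpermR su eq_sym.
  by rewrite tpermD ?ds // eq_sym.
apply/subsetP => -[i j] ijB.
have /eqP sij : s i == j by rewrite -mem_perm_graph (subsetP sBs) // setU1r.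
have iu : u != i by apply: contraNneq uvB => ui; rewrite ui -sij -ui su in ijB *.
have iw : w != i by apply: contraNneq wB => ->; apply/imsetP; exists (i, j).
by rewrite mem_perm_graph permM tpermD // sij.
Qed.

Lemma switching : (n - #|B| - 3) * #|derangements_over B'| <= #|derangements_over B|.
Proof.
pose P := [set p : {perm 'I_n} * 'I_n | (p.1 \in derangements_over B') && (p.2 \in free p.1)].
have card_P : (n - #|B| - 3) * #|derangements_over B'| <= #|P|.
  have -> : #|P| = \sum_(s in derangements_over B') #|free s|.
    rewrite (eq_bigr (fun s => \sum_(w in free s) 1)) => [|s _]; last by rewrite sum1_card.
    by rewrite pair_big_dep /= sum1_card; apply: eq_card => p; rewrite inE.
  by rewrite mulnC -sum_nat_const; apply: leq_sum => s _; apply: card_free.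
have switch_inj : {in P &, injective (fun p => switch p.1 p.2)}.
  move=> [s w] [t w'] /setIdP[sB' _] /setIdP[tB' _] /= est.
  have switch_w r x : r \in derangements_over B' -> switch r x x = v.
    rewrite inE => /andP[_ sBr]; rewrite permM tpermR; apply/eqP.
    by rewrite -mem_perm_graph (subsetP sBr) // setU11.
  have ww' : w = w' by apply: (@perm_inj _ (switch t w')); rewrite -{1}est !switch_w.
  by move: est; rewrite ww' => /mulgI ->.
apply: leq_trans card_P _; rewrite -(card_in_imset switch_inj); apply: subset_leq_card.
by apply/subsetP => _ /imsetP[[s w] /setIdP[sB' wf] ->]; apply: switch_over.
Qed.

End Switching.

Lemma switching_maxn1 B e : e \notin B ->
  maxn 1 (n - #|B| - 3) * #|derangements_over (e |: B)| <= #|derangements_over B|.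
Proof.
case: e => u v uvB; rewrite maxnMl geq_max mul1n switching // andbT.
exact/subset_leq_card/derangements_overS/subsetUr.
Qed.

Lemma switching_iter A Y : [disjoint A & Y] ->
  (n - #|A| - 3) ^_ (minn #|Y| (n - #|A| - 3)) * #|derangements_over (A :|: Y)|
    <= #|derangements_over A|.
Proof.
set K := n - #|A| - 3; move: {2}#|Y| (erefl #|Y|) => y.
elim: y Y => [|y IH] Y cY dAY; first by rewrite cY min0n (cards0_eq cY) setU0 mul1n.
have [e Ye] : exists e, e \in Y by apply/card_gt0P; rewrite cY.
have cYe : #|Y :\ e| = y by move: cY; rewrite (cardsD1 e) Ye => -[].
have dAYe : [disjoint A & Y :\ e] := disjointWr (subsetDl _ _) dAY.
have eAYe : e \notin A :|: Y :\ e by rewrite !inE eqxx /= orbF (disjointFl dAY Ye).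
have := switching_maxn1 eAYe.
rewrite setUCA setD1K // cardsU (disjoint_setI0 dAYe) cards0 subn0 cYe => step.
rewrite cY ffact_minnS -mulnA; apply: leq_trans (IH _ cYe dAYe).
by rewrite cYe leq_mul2l (_ : K - y = n - (#|A| + y) - 3) ?step ?orbT //; lia.
Qed.

Lemma card_derangements_overU A X : 4 * #|A| <= n -> [disjoint A & X] ->
  n ^ #|X| * #|derangements_over (A :|: X)| <= 12 ^ #|X| * #|derangements_over A|.
Proof.
move=> le_An dAX.
have le_AX_A := subset_leq_card (derangements_overS (subsetUl A X)).
have [le_n12 | lt12n] := leqP n 12; first exact: leq_mul (leq_exp2rW _ le_n12) le_AX_A.
have [-> | [s sD]] := set_0Vmem (derangements_over (A :|: X)); first by rewrite cards0 muln0.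
have le_AXn : #|A| + #|X| <= n.
  move: sD; rewrite inE => /andP[_ /subset_leq_card].
  by rewrite card_perm_graph cardsU (disjoint_setI0 dAX) cards0 subn0.
have le_nK := @exp_le_ffact n (n - #|A| - 3) #|X|.
apply: leq_trans (leq_mul (le_nK _ _ _) (leqnn _)) _; try lia.
by rewrite -mulnA leq_mul2l switching_iter ?orbT.
Qed.

End Derangements.

Import GRing.Theory Num.Theory.
Local Open Scope ring_scope.

Theorem lemma13 (n : nat) :
  spread2 (n%:R / 12%:R) (n%:R / 4%:R) (derangements n).
Proof.
move=> A le_A X.
have [dAX | /link_link_eq0->] := boolP [disjoint A & X]; last first.
  by rewrite cards0 mulr_ge0 ?invr_ge0 ?exprn_ge0 ?divr_ge0.
have le_An : (4 * #|A| <= n)%N.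
  by rewrite -(ler_nat rat) natrM mulrC -ler_pdivlMr ?ltr0n.
have key := card_derangements_overU le_An dAX.
have nX_gt0 : (0 < n ^ #|X|)%N.
  rewrite expn_gt0; case: n {A le_A le_An dAX key} X => // X.
  by rewrite -leqn0 (leq_trans (max_card _)) // card_prod card_ord.
rewrite link_link // !card_link_derangements.
rewrite -exprVn invf_div expr_div_n mulrAC ler_pdivlMr -?natrX ?ltr0n //.
by rewrite -!natrM ler_nat mulnC.
Qed.
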